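(* Let $N\ge 1$ and $m\ge 1$ be integers, let $\Delta\ge 1$ and $K\ge 1$ be reals, and suppose $2^m\le N/(K\Delta)$. Then there is a set $\mathcal{Y}\subseteq(\{0,1\}^m)^N$ whose entropy deficiency is at most $\Delta$ and whose min-entropy rate is at least $1-1/m$, such that for every $I\subseteq[N]$ with $|I|\le (K-1)\Delta$, the set $\mathrm{IND}_m^{[N]\setminus I}([m]^N,\mathcal{Y})$ does not contain the all-$0$ string.
   Context: The Index function $\mathrm{IND}_m:[m]\times\{0,1\}^m\to\{0,1\}$ is $\mathrm{IND}_m(x,y)=y_x$. For $\mathcal{A}\subseteq[m]^N$, $\mathcal{B}\subseteq(\{0,1\}^m)^N$ and $J\subseteq[N]$, $\mathrm{IND}_m^J(\mathcal{A},\mathcal{B})\subseteq\{0,1\}^J$ denotes the set of all vectors $(\mathrm{IND}_m(x_i,y_i))_{i\in J}$ with $x\in\mathcal{A}$, $y\in\mathcal{B}$. A set $\mathcal{S}\subseteq U^N$ is identified with the uniform distribution on it. The entropy deficiency of a distribution $\mathcal{D}$ on a finite universe $V$ is $\log_2|V|-H(\mathcal{D})$, where $H$ is Shannon entropy; for a set $\mathcal{Y}\subseteq(\{0,1\}^m)^N$ this is $mN-\log_2|\mathcal{Y}|$. The min-entropy rate of a distribution $\mathcal{D}$ on $U^N$ is the largest $\tau$ such that for every $J\subseteq[N]$ and every $\alpha_J\in U^J$, $\Pr_{x\sim\mathcal{D}}[x_J=\alpha_J]\le |U|^{-\tau|J|}$ (here $U=\{0,1\}^m$, $|U|=2^m$).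 *)

From mathcomp Require Import all_boot all_order all_algebra.
From mathcomp Require Import all_classical all_reals all_analysis.
Set Implicit Arguments. Unset Strict Implicit. Unset Printing Implicit Defensive.
Import Order.TTheory GRing.Theory Num.Theory.
Local Open Scope ring_scope.

Notation word m := {ffun 'I_m -> bool}.

Definition IND (m : nat) (x : 'I_m) (y : word m) : bool := y x.

(* IND_m^J(A, B): the set of vectors (IND_m(x_i, y_i))_{i in J}, x in A, y in B.
   A vector in {0,1}^J is encoded as a function on [N] that is false outside J. *)
Definition INDJ (N m : nat) (J : {set 'I_N}) (A : {set {ffun 'I_N -> 'I_m}})
  (B : {set {ffun 'I_N -> word m}}) : {set {ffun 'I_N -> bool}} :=
  [set [ffun i => (i \in J) && IND (x i) (y i)] | x : {ffun 'I_N -> 'I_m} in A, y : {ffun 'I_N -> word m} in B].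

Definition zero_string (N : nat) : {ffun 'I_N -> bool} := [ffun => false].

Definition log2 (R : realType) (x : R) : R := ln x / ln 2.

(* entropy deficiency of (the uniform distribution on) Y : m N - log2 |Y| *)
Definition entropy_deficiency (R : realType) (N m : nat)
  (Y : {set {ffun 'I_N -> word m}}) : R :=
  (m * N)%:R - log2 (#|Y|%:R : R).

(* The min-entropy rate of (uniform on) Y is at least tau: for every J and every
   alpha_J in U^J, Pr_{y ~ Y}[y_J = alpha_J] <= |U|^(-tau |J|), |U| = 2^m. *)
Definition min_entropy_rate_ge (R : realType) (N m : nat)
  (Y : {set {ffun 'I_N -> word m}}) (tau : R) : Prop :=
  forall (J : {set 'I_N}) (alpha : {ffun 'I_N -> word m}),
    (#|[set y in Y | [forall i in J, y i == alpha i]]|%:R / #|Y|%:R : R)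
      <= ((2 ^ m)%:R : R) `^ (- (tau * #|J|%:R)).

(** Take for [Y] the strings having at least [k := N %/ 2^m] blocks equal
    to the all-ones word.  For a uniform string the number of all-ones blocks
    is binomial with parameters [N] and [1/(a+1)], [a := 2^m - 1]: the strings
    with exactly [j] such blocks number ['C(N, j) * a^(N-j)].  Since
    [k (a+1) <= N], that binomial has median at least [k]: matching the
    lower-tail term of index [k-1-j] with the upper-tail term of index [k+j],
    the ratio of the two is at least [a^(2j+1)].  Hence [|Y| >= 2^(mN-1)], so
    the entropy deficiency is at most [1], and fixing [j >= 1] blocks leaves at
    most [2^(m(N-j))] strings, a fraction [<= 2^(1-mj) <= 2^(-(m-1)j)] of [Y].
    Finally [|I| <= (K-1) Delta < K Delta <= k], so every [y] in [Y] has an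
    all-ones block outside [I], on which the index function is [1] whatever
    the pointer [x] is. *)

From mathcomp Require Import all_boot all_order all_algebra.
From mathcomp Require Import all_classical all_reals all_analysis.
From mathcomp Require Import zify ring lra.
Import Order.TTheory GRing.Theory Num.Theory.
Set Implicit Arguments. Unset Strict Implicit. Unset Printing Implicit Defensive.

Section BinomialMedian.
Variables (N k a : nat).
Hypothesis kaN : k * a.+1 <= N.

Lemma binomial_ratio_step (p q : nat) :
  p + q = k.*2 -> a ^ 2 * (p * q) <= (N.+1 - p) * (N.+1 - q).
Proof.
move=> pq2k.
have pq_le : p * q <= k * k by have := (nat_AGM2 p q).1; rewrite pq2k; lia.
have [M eM] : exists M, N.+1 = k + M by exists (N.+1 - k); lia.
have aM : a * k < M by lia.
have -> : (N.+1 - p) * (N.+1 - q) = p * q + M * M - k * k by nia.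
nia.
Qed.

Lemma bin_mirror_le (j : nat) : j < k -> 'C(N, k - j.+1) * a ^ j.*2.+1 <= 'C(N, k + j).
Proof.
elim: j => [|j IHj] ltjk.
  have [k' ek] : exists k', k = k'.+1 by exists k.-1; rewrite prednK.
  rewrite ek subSS subn0 addn0 expn1 -(@leq_pmul2l k) ?ek // mul_bin_left.
  by rewrite mulnCA mulnC leq_mul2r; apply/orP; right; lia.
move/(_ (ltnW ltjk)) in IHj.
set p := k - j.+2; set q := k + j.
have step : a ^ 2 * (p.+1 * q.+1) <= (N - p) * (N - q).
  by rewrite -[N - p]subSS -[N - q]subSS binomial_ratio_step // /p /q; lia.
have pos : 0 < (N - p) * q.+1 by rewrite muln_gt0 /p /q; lia.
have ep : k - j.+1 = p.+1 by rewrite /p; lia.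
rewrite ep -/q in IHj; rewrite addnS -/q -(leq_pmul2l pos); clearbody p q.
have -> : (N - p) * q.+1 * ('C(N, p) * a ^ j.+1.*2.+1)
          = (p.+1 * 'C(N, p.+1)) * a ^ j.*2.+1 * (a ^ 2 * q.+1).
  by rewrite mul_bin_left doubleS !expnS; ring.
have -> : (N - p) * q.+1 * 'C(N, q.+1) = 'C(N, q) * ((N - p) * (N - q)).
  by rewrite -mulnA mul_bin_left; ring.
have -> : p.+1 * 'C(N, p.+1) * a ^ j.*2.+1 * (a ^ 2 * q.+1)
          = 'C(N, p.+1) * a ^ j.*2.+1 * (a ^ 2 * (p.+1 * q.+1)) by ring.
exact: leq_mul IHj step.
Qed.

Lemma binomial_lower_tail_le : 0 < a ->
  \sum_(0 <= j < k) 'C(N, j) * a ^ (N - j)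
    <= \sum_(k <= j < N.+1) 'C(N, j) * a ^ (N - j).
Proof.
move=> a_gt0.
rewrite big_nat_rev [X in _ <= X](big_cat_nat (n := k + k)) ?leq_addr //=; last first.
  rewrite (leq_trans _ (leqnSn N)) // (leq_trans _ kaN) //.
  by rewrite addnn -muln2 leq_mul2l ltnS a_gt0 orbT.
have -> : \sum_(k <= i < k + k) 'C(N, i) * a ^ (N - i)
          = \sum_(0 <= j < k) 'C(N, k + j) * a ^ (N - (k + j)).
  by rewrite -{1}[k]add0n big_addn addnK; apply: eq_bigr => j _; rewrite addnC.
apply: leq_trans (leq_addr _ _); rewrite !big_mkord; apply: leq_sum => j _.
have ltjk := ltn_ord j.
have -> : N - (0 + k - j.+1) = j.*2.+1 + (N - (k + j)) by nia.
by rewrite add0n expnD mulnA leq_mul2r bin_mirror_le ?orbT.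
Qed.

Lemma binomial_upper_tail_half : 0 < a ->
  a.+1 ^ N <= 2 * \sum_(k <= j < N.+1) 'C(N, j) * a ^ (N - j).
Proof.
move=> a_gt0.
have kN : k <= N.+1 by rewrite (leq_trans _ (leqnSn N)) // (leq_trans _ kaN) // leq_pmulr.
have -> : a.+1 ^ N = \sum_(0 <= j < N.+1) 'C(N, j) * a ^ (N - j).
  by rewrite -addn1 expnDn big_mkord; apply: eq_bigr => j _; rewrite exp1n muln1.
by rewrite (big_cat_nat (n := k)) //= mul2n -addnn leq_add2r binomial_lower_tail_le.
Qed.

End BinomialMedian.

Section CountingFunctions.
Variables (I T : finType).

Lemma card_ffun_family (F : I -> pred T) :
  #|[set y : {ffun I -> T} | [forall i, y i \in F i]]| = \prod_i #|F i|.
Proof.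
rewrite -[LHS]/#|[set y : {ffun I -> T} in family F]| cardsE.
by rewrite card_family foldrE big_map big_enum.
Qed.

Lemma card_ffun_pinned (A : {set I}) (e : I -> T) (Q : pred T) :
  #|[set y : {ffun I -> T} | [forall i, if i \in A then y i == e i else Q (y i)]]|
    = #|Q| ^ #|~: A|.
Proof.
pose F i := [pred t | if i \in A then t == e i else Q t].
rewrite -[LHS]/#|[set y : {ffun I -> T} | [forall i, y i \in F i]]| card_ffun_family.
rewrite (bigID (mem A)) /= big1 => [|i iA]; last first.
  by rewrite -(card1 (e i)); apply: eq_card => t; rewrite !inE iA.
rewrite mul1n -prod_nat_const; apply: eq_big => [i|i /negbTE iA]; first by rewrite inE.
by apply: eq_card => t; rewrite unfold_in /= iA.
Qed.

Lemma card_ffun_agree (J : {set I}) (alpha : {ffun I -> T}) :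
  #|[set y : {ffun I -> T} | [forall i in J, y i == alpha i]]| = #|T| ^ #|~: J|.
Proof.
apply: etrans (card_ffun_pinned J alpha predT); apply: eq_card => y; rewrite !inE.
by apply: eq_forallb => i; case: (i \in J).
Qed.

Lemma card_ffun_level_set (e : T) (A : {set I}) :
  #|[set y : {ffun I -> T} | [set i | y i == e] == A]| = #|T|.-1 ^ #|~: A|.
Proof.
rewrite -(cardC1 e); apply: etrans (card_ffun_pinned A (fun=> e) (predC1 e)).
apply: eq_card => y; rewrite !inE.
apply/eqP/forallP => [<- i|yA]; first by rewrite inE /=; case: (y i == e).
by apply/setP => i; move: (yA i); rewrite !inE /=; case: (i \in A); case: (y i == e).
Qed.

Lemma sum_set_card (P : pred nat) (F : nat -> nat) :
  \sum_(A : {set I} | P #|A|) F #|A| = \sum_(j < #|I|.+1 | P j) 'C(#|I|, j) * F j.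
Proof.
have card_lt (A : {set I}) : #|A| < #|I|.+1 by rewrite ltnS max_card.
rewrite (partition_big (fun A : {set I} => inord #|A| : 'I_#|I|.+1) P) => [|A PA]; last first.
  by rewrite inordK.
apply: eq_bigr => j Pj; rewrite -card_draws -sum_nat_const.
apply: eq_big => [A|A /andP [_ /eqP <-]]; last by rewrite inordK.
by rewrite inE -val_eqE /= inordK //; case: eqP => [->|]; rewrite ?Pj ?andbF.
Qed.

Lemma card_ffun_many_hits (e : T) (k : nat) :
  #|[set y : {ffun I -> T} | k <= #|[set i | y i == e]|]|
    = \sum_(k <= j < #|I|.+1) 'C(#|I|, j) * #|T|.-1 ^ (#|I| - j).
Proof.
rewrite big_geq_mkord -(sum_set_card (fun j => k <= j) (fun j => #|T|.-1 ^ (#|I| - j))).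
rewrite -sum1_card (partition_big (fun y : {ffun I -> T} => [set i | y i == e])
  (fun A => k <= #|A|)) /= => [|y]; last by rewrite inE.
apply: eq_bigr => A kA; rewrite -{1}(cardsC A) addKn -(card_ffun_level_set e) sum1dep_card.
apply: eq_card => y; rewrite !inE.
by case: eqP => [->|]; rewrite ?kA ?andbF.
Qed.

End CountingFunctions.

Lemma card_word (m : nat) : #|word m| = 2 ^ m.
Proof. by rewrite card_ffun card_bool card_ord. Qed.

Lemma half_dense_card_gt0 (n c : nat) : 2 ^ n <= 2 * c -> 0 < c.
Proof. by case: c => //; rewrite muln0 leqn0 expn_eq0. Qed.

Lemma card_agree_half_dense (N m : nat) (Y : {set {ffun 'I_N -> word m}})
    (J : {set 'I_N}) (alpha : {ffun 'I_N -> word m}) :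
  0 < m -> 2 ^ (m * N) <= 2 * #|Y| ->
  #|[set y in Y | [forall i in J, y i == alpha i]]| * 2 ^ ((m - 1) * #|J|) <= #|Y|.
Proof.
move=> m_gt0 dense; set S := [set y in Y | _].
have SY : #|S| <= #|Y| by apply/subset_leq_card/fintype.subsetP => y; rewrite inE => /andP[].
have [->|J_gt0] := posnP #|J|; first by rewrite muln0 muln1.
have S_le : #|S| <= 2 ^ (m * (N - #|J|)).
  apply: (@leq_trans #|[set y : {ffun 'I_N -> word m} | [forall i in J, y i == alpha i]]|).
    by apply/subset_leq_card/fintype.subsetP => y; rewrite !inE => /andP[].
  by rewrite card_ffun_agree card_word -expnM (cardsCs (~: J)) finset.setCK card_ord.
rewrite -(leq_pmul2l (ltn0Sn 1)); apply: leq_trans dense.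
rewrite mulnA; apply: leq_trans (leq_mul (leq_mul (leqnn 2) S_le) (leqnn _)) _.
rewrite -expnS -expnD leq_exp2l //.
have J_le : #|J| <= N by have := max_card J; rewrite card_ord.
have : #|J| <= m * #|J| by rewrite leq_pmull.
have : m * #|J| <= m * N by rewrite leq_mul2l J_le orbT.
rewrite mulnBr mulnBl mul1n; lia.
Qed.

Definition many_full_words (N m k : nat) : {set {ffun 'I_N -> word m}} :=
  [set y : {ffun 'I_N -> word m} | k <= #|[set i | y i == [ffun=> true]]|].

Lemma card_many_full_words (N m k : nat) : 0 < m -> k * 2 ^ m <= N ->
  2 ^ (m * N) <= 2 * #|many_full_words N m k|.
Proof.
move=> m_gt0 kN.
have two_m : (2 ^ m).-1.+1 = 2 ^ m by rewrite prednK ?expn_gt0.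
rewrite card_ffun_many_hits card_word !card_ord expnM -{1}two_m.
apply: binomial_upper_tail_half; first by rewrite two_m.
by rewrite -ltnS two_m -{1}(expn0 2) ltn_exp2l.
Qed.

Lemma zero_string_notin_many_full_words (N m k : nat) (I : {set 'I_N}) : #|I| < k ->
  zero_string N \notin INDJ (~: I) [set: {ffun 'I_N -> 'I_m}] (many_full_words N m k).
Proof.
move=> ltIk; apply/imset2P => -[x y _ yY zero_eq].
have /fintype.subsetPn [i] : ~~ ([set i | y i == [ffun=> true]] \subset I).
  apply: contraTN yY => /subset_leq_card full_le; rewrite inE -ltnNge.
  exact: leq_ltn_trans full_le ltIk.
rewrite inE => /eqP full_i notIi.
have := congr1 (fun f : {ffun 'I_N -> bool} => f i) zero_eq.
by rewrite !ffunE inE notIi /IND full_i ffunE.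
Qed.

Local Open Scope ring_scope.

Lemma card_lt_threshold (R : realType) (N m c : nat) (Delta K : R) :
  1 <= Delta -> 1 <= K -> ((2 ^ m)%:R : R) <= N%:R / (K * Delta) ->
  (c%:R : R) <= (K - 1) * Delta -> (c < N %/ 2 ^ m)%N.
Proof.
move=> Delta_ge1 K_ge1 hN hc.
have KD_gt0 : 0 < K * Delta by apply: mulr_gt0; lra.
rewrite leq_divRL ?expn_gt0 // -(ler_nat R) natrM.
rewrite ler_pdivlMr // in hN.
apply: le_trans hN; rewrite mulrC ler_pM2l ?ltr0n ?expn_gt0 //.
by rewrite -natr1; nra.
Qed.

Lemma entropy_deficiency_le1 (R : realType) (N m : nat) (Y : {set {ffun 'I_N -> word m}}) :
  (2 ^ (m * N) <= 2 * #|Y|)%N -> @entropy_deficiency R N m Y <= 1.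
Proof.
move=> dense.
have Y_gt0 : 0 < #|Y|%:R :> R by rewrite ltr0n (half_dense_card_gt0 dense).
have ln2_gt0 : 0 < ln (2 : R) by apply: ln_gt0; lra.
have : ln (2 : R) *+ (m * N) <= ln 2 + ln #|Y|%:R.
  rewrite -lnXn // -lnM ?posrE // ler_ln ?posrE ?mulr_gt0 ?exprn_gt0 //.
  by rewrite -natrX -natrM ler_nat.
rewrite /entropy_deficiency /log2 lerBlDr -(ler_pM2r ln2_gt0) mulrDl mul1r.
by rewrite divfK ?gt_eqF // mulr_natl.
Qed.

Lemma powR_exp2_rate (R : realType) (m j : nat) : (0 < m)%N ->
  ((2 ^ m)%:R : R) `^ (- ((1 - 1 / m%:R) * j%:R)) = ((2 ^ ((m - 1) * j))%:R)^-1.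
Proof.
move=> m_gt0.
rewrite natrX -powR_mulrn // -powRrM.
have -> : m%:R * (- ((1 - 1 / m%:R) * j%:R)) = - (((m - 1) * j)%N%:R : R).
  by rewrite natrM natrB //; field; rewrite pnatr_eq0 -lt0n.
by rewrite powRN powR_mulrn // natrX.
Qed.

Lemma min_entropy_rate_half_dense (R : realType) (N m : nat) (Y : {set {ffun 'I_N -> word m}}) :
  (0 < m)%N -> (2 ^ (m * N) <= 2 * #|Y|)%N -> @min_entropy_rate_ge R N m Y (1 - 1 / m%:R).
Proof.
move=> m_gt0 dense J alpha.
have Y_gt0 : 0 < #|Y|%:R :> R by rewrite ltr0n (half_dense_card_gt0 dense).
rewrite powR_exp2_rate // ler_pdivrMr // mulrC ler_pdivlMr ?ltr0n ?expn_gt0 //.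
by rewrite -natrM ler_nat card_agree_half_dense.
Qed.

Theorem theorem2 (R : realType) (N m : nat) (Delta K : R) :
  (1 <= N)%N -> (1 <= m)%N -> 1 <= Delta -> 1 <= K ->
  ((2 ^ m)%:R : R) <= N%:R / (K * Delta) ->
  exists Y : {set {ffun 'I_N -> {ffun 'I_m -> bool}}},
    [/\ Y != finset.set0,
        @entropy_deficiency R N m Y <= Delta,
        @min_entropy_rate_ge R N m Y (1 - 1 / m%:R) &
        forall I : {set 'I_N}, (#|I|%:R : R) <= (K - 1) * Delta ->
          zero_string N \notin INDJ (~: I) [set: {ffun 'I_N -> 'I_m}] Y].
Proof.
move=> _ m_gt0 Delta_ge1 K_ge1 hN.
have dense := card_many_full_words m_gt0 (leq_divM N (2 ^ m)).
exists (many_full_words N m (N %/ 2 ^ m)); split.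
- by rewrite -card_gt0 (half_dense_card_gt0 dense).
- exact: le_trans (entropy_deficiency_le1 R dense) Delta_ge1.
- exact: min_entropy_rate_half_dense.
- move=> I hI; apply: zero_string_notin_many_full_words.
  exact: card_lt_threshold Delta_ge1 K_ge1 hN hI.
Qed.
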